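(* For every integer $k\ge1$, the series $G_k(x)=1+\sum_{n\ge0}\big|\mathcal A_{n}^{(k)}\big|x^{n+1}$ satisfies $$G_k(x)=-\frac{U_{k-2}(x/2)+(-1)^kU_{k-3}(x/2)}{U_k(x/2)+(-1)^kU_{k-1}(x/2)}.$$
   Context: For integers $n\ge0$ and $k\ge1$, $\mathcal A_n^{(k)}$ is the set of all integer sequences $(a_1,\dots,a_n)$ with $1\le a_i\le k$ and $a_1\le a_2\ge a_3\le a_4\ge\cdots$ (i.e. $a_{2j-1}\le a_{2j}$ and $a_{2j}\ge a_{2j+1}$ whenever defined); $\mathcal A_0^{(k)}$ consists of the empty sequence. $U_n$ is the Chebyshev polynomial of the second kind, defined for all integers $n$ by $U_0=1$, $U_1(x)=2x$ and $U_{n+1}(x)=2xU_n(x)-U_{n-1}(x)$ (so $U_{-1}=0$, $U_{-2}=-1$). *)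

From HB Require Import structures.
From mathcomp Require Import all_boot all_order all_algebra.
Set Implicit Arguments. Unset Strict Implicit. Unset Printing Implicit Defensive.
Import Order.TTheory GRing.Theory Num.Theory.
Local Open Scope ring_scope.

(* Chebyshev polynomials of the second kind, for n >= 0:
   U_0 = 1, U_1 = 2X, U_{n+2} = 2X U_{n+1} - U_n.  Computed as pairs (U_n, U_{n+1}). *)
Fixpoint chebU_pair (R : comNzRingType) (n : nat) : {poly R} * {poly R} :=
  match n with
  | 0%N => (1, 2%:R *: 'X)
  | n'.+1 => let: (a, b) := chebU_pair R n' in (b, 2%:R *: 'X * b - a)
  end.

Definition chebU_nat (R : comNzRingType) (n : nat) : {poly R} := (chebU_pair R n).1.

(* Extension to all integers by the same recurrence:
   U_{-1} = 0, U_{-m-2} = - U_m  (so U_{-2} = -1). *)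
Definition chebU (R : comNzRingType) (n : int) : {poly R} :=
  match n with
  | Posz m => chebU_nat R m
  | Negz 0 => 0
  | Negz m.+1 => - chebU_nat R m
  end.

Definition chebU_half (n : int) : {poly rat} := chebU rat n \Po (2%:R^-1 *: 'X).

(* The up-down (alternating) condition a_1 <= a_2 >= a_3 <= a_4 >= ... on a
   sequence s (0-indexed: s_i <= s_{i+1} for i even, s_i >= s_{i+1} for i odd),
   together with 1 <= a_i <= k and length n. *)
Definition in_A (n k : nat) (s : seq nat) : bool :=
  [&& size s == n,
      all (fun a => (1 <= a <= k)%N) s &
      [forall i : 'I_n, (i.+1 < n)%N ==>
         (if ~~ odd i then (nth 0%N s i <= nth 0%N s i.+1)%N
          else (nth 0%N s i.+1 <= nth 0%N s i)%N)]].

(* |A_n^(k)|: every sequence with entries in {1..k} of length n is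
   [seq (f i).+1 | i <- enum 'I_n] for a unique f : {ffun 'I_n -> 'I_k}. *)
Definition cardA (n k : nat) : nat :=
  #|[set f : {ffun 'I_n -> 'I_k} | in_A n k [seq (f i : nat).+1 | i <- enum 'I_n]]|.

Definition Gcoef (k m : nat) : rat :=
  match m with 0%N => 1 | n.+1 => (cardA n k)%:R end.

Definition Gnum (k : nat) : {poly rat} :=
  chebU_half (k%:Z - 2) + (-1) ^+ k *: chebU_half (k%:Z - 3).
Definition Gden (k : nat) : {poly rat} :=
  chebU_half k%:Z + (-1) ^+ k *: chebU_half (k%:Z - 1).

From HB Require Import structures.
From mathcomp Require Import all_boot all_order all_algebra.
From mathcomp Require Import zify ring.
Import Order.TTheory GRing.Theory Num.Theory.
Set Implicit Arguments. Unset Strict Implicit. Unset Printing Implicit Defensive.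

(* Proof by the transfer-matrix method.  Write K = k+1 for the number of
   values and shift them to 0..k.  Let c_n(j) count the up-down sequences of
   length n+1 ending with j; appending one entry gives
   c_{n+1}(j) = sum of c_n(i) over the i that may precede j at step n.
   Reflecting the values (j |-> k-j) at every other step turns the two
   alternating step relations into the single relation i + j >= k, so the
   reflected counts are the walks v_n = M^n e_k of the 0/1 matrix
   M_{ji} = [i + j >= k], and |A_n| = v_{n+1}(k).
   A general transfer-matrix lemma says that any polynomial vector P with
   P = e_k Y + x M P satisfies (sum_n v_n x^n) Y = P.  With Y = Gden we
   exhibit such a P, built from Chebyshev polynomials, with P_k = -Gnum. *)

Definition updown_step (i a b : nat) : bool :=
  if ~~ odd i then (a <= b)%N else (b <= a)%N.

Definition updown (n : nat) (h : nat -> nat) : bool :=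
  all (fun i => updown_step i (h i) (h i.+1)) (iota 0 n.-1).

Definition values n K (f : {ffun 'I_n -> 'I_K}) : seq nat :=
  [seq (f i : nat).+1 | i <- enum 'I_n].

Lemma nth_values n K (f : {ffun 'I_n -> 'I_K}) (i : 'I_n) :
  nth 0 (values f) i = (f i).+1.
Proof. by rewrite /values (nth_map i) ?size_enum_ord ?nth_ord_enum. Qed.

(* Membership in A_n^(K) only depends on the up-down condition: the range
   and length conditions hold by construction. *)
Lemma in_A_values n K (f : {ffun 'I_n -> 'I_K}) :
  in_A n K (values f) = updown n (nth 0 (values f)).
Proof.
have range : all (fun a => 0 < a <= K) (values f).
  by apply/allP => x /mapP [i _ ->]; rewrite /= ltn_ord.
rewrite /in_A /values size_map size_enum_ord eqxx range /=.
apply/forallP/allP => [step i | step i].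
- rewrite mem_iota add0n => lt_i.
  have lt_in : (i < n)%N by lia.
  by have := step (Ordinal lt_in); rewrite /= (_ : (i.+1 < n)%N = true) //; lia.
- by apply/implyP => lt_i; apply: step; rewrite mem_iota; lia.
Qed.

Lemma updown_small n h : (n <= 1)%N -> updown n h.
Proof. by case: n => [|[]]. Qed.

Lemma updown_snoc n h :
  updown n.+2 h = updown n.+1 h && updown_step n (h n) (h n.+1).
Proof.
have iota_snoc : iota 0 n.+1 = iota 0 n ++ [:: n] by rewrite -addn1 iotaD.
by rewrite /updown [n.+2.-1]/= [n.+1.-1]/= iota_snoc all_cat /= andbT.
Qed.

Lemma updown_ext n h h' :
  (forall m, (m < n)%N -> h m = h' m) -> updown n h = updown n h'.
Proof.
move=> eq_h; apply: eq_in_all => i; rewrite mem_iota => lt_i.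
by rewrite !eq_h //; lia.
Qed.

Section Snoc.
Variables (K n : nat).

Definition snoc (p : {ffun 'I_n -> 'I_K} * 'I_K) : {ffun 'I_n.+1 -> 'I_K} :=
  [ffun i : 'I_n.+1 => if insub (val i) is Some i' then p.1 i' else p.2].

Definition unsnoc (f : {ffun 'I_n.+1 -> 'I_K}) : {ffun 'I_n -> 'I_K} * 'I_K :=
  ([ffun i : 'I_n => f (widen_ord (leqnSn n) i)], f ord_max).

Lemma snocK : cancel snoc unsnoc.
Proof.
case=> g a; rewrite /unsnoc /snoc; congr (_, _).
- by apply/ffunP => i; rewrite !ffunE /= (valK i).
- by rewrite ffunE insubF //= ltnn.
Qed.

Lemma unsnocK : cancel unsnoc snoc.
Proof.
move=> f; apply/ffunP => i; rewrite ffunE.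
case: insubP => [i' _ val_i'|not_lt] /=; rewrite ?ffunE; congr (f _); apply: val_inj => //=.
by apply/eqP; rewrite eqn_leq leqNgt not_lt -ltnS ltn_ord.
Qed.

Lemma snoc_bij : bijective snoc.
Proof. exact: Bijective snocK unsnocK. Qed.

Lemma sum_snoc (F : {ffun 'I_n.+1 -> 'I_K} -> nat) :
  \sum_f F f = \sum_(g : {ffun 'I_n -> 'I_K}) \sum_(a : 'I_K) F (snoc (g, a)).
Proof.
by rewrite pair_big /= (reindex snoc) //; apply: onW_bij snoc_bij.
Qed.

Lemma snoc_last p : snoc p ord_max = p.2.
Proof. by rewrite ffunE insubF //= ltnn. Qed.

Lemma nth_snoc p m : (m < n)%N -> nth 0 (values (snoc p)) m = nth 0 (values p.1) m.
Proof.
move=> lt_m; have lt_m1 : (m < n.+1)%N by lia.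
rewrite (nth_values _ (Ordinal lt_m1)) (nth_values _ (Ordinal lt_m)) ffunE /=.
by rewrite insubT.
Qed.

Lemma nth_snoc_last p : nth 0 (values (snoc p)) n = (p.2 : nat).+1.
Proof. by rewrite (nth_values _ ord_max) snoc_last. Qed.
End Snoc.

Lemma sum_indicator_eq (T : finType) (x : T) (b : T -> bool) :
  \sum_(y : T) (b y && (y == x)) = b x.
Proof.
rewrite (bigD1 x) //= eqxx andbT big1 ?addn0 // => y ne_yx.
by rewrite (negPf ne_yx) andbF.
Qed.

Lemma cardA_sum n K :
  cardA n K = \sum_(f : {ffun 'I_n -> 'I_K}) updown n (nth 0 (values f)).
Proof.
rewrite /cardA -sum1dep_card big_mkcond; apply: eq_bigr => f _.
by rewrite in_A_values; case: updown.
Qed.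

Lemma cardA0 K : cardA 0 K = 1%N.
Proof.
rewrite cardA_sum; under eq_bigr => f _ do rewrite updown_small //.
by rewrite sum_nat_const card_ffun !card_ord expn0.
Qed.

Definition count_last K n (j : 'I_K) : nat :=
  \sum_(f : {ffun 'I_n.+1 -> 'I_K}) (updown n.+1 (nth 0 (values f)) && (f ord_max == j)).

Lemma cardA_last n K : cardA n.+1 K = \sum_(j : 'I_K) count_last n j.
Proof.
rewrite cardA_sum /count_last exchange_big /=; apply: eq_bigr => f _.
by under eq_bigr => j _ do rewrite eq_sym; rewrite sum_indicator_eq.
Qed.

Lemma count_last0 K (j : 'I_K) : count_last 0 j = 1%N.
Proof.
rewrite /count_last sum_snoc.
under eq_bigr => g _ do under eq_bigr => a _ do rewrite updown_small // snoc_last.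
under eq_bigr => g _ do rewrite sum_indicator_eq.
by rewrite sum_nat_const card_ffun !card_ord expn0.
Qed.

Lemma count_last_rec K n (j : 'I_K) :
  count_last n.+1 j = \sum_(i : 'I_K | updown_step n i j) count_last n i.
Proof.
rewrite /count_last sum_snoc.
have split_snoc (g : {ffun 'I_n.+1 -> 'I_K}) (a : 'I_K) :
    updown n.+2 (nth 0 (values (snoc (g, a))))
    = updown n.+1 (nth 0 (values g)) && updown_step n (g ord_max) a.
  rewrite updown_snoc (nth_snoc _ (ltnSn n)) nth_snoc_last (nth_values _ ord_max).
  by congr (_ && _); apply: updown_ext => m lt_m; rewrite nth_snoc.
under eq_bigr => g _ do under eq_bigr => a _ do rewrite split_snoc snoc_last -andbA.
rewrite [RHS]exchange_big /=; apply: eq_bigr => g _.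
under eq_bigr => a _ do rewrite andbA.
rewrite sum_indicator_eq; case: (boolP (updown_step n _ j)) => [step_j | no_step].
- rewrite (bigD1 (g ord_max)) //= eqxx andbT big1 ?addn0 // => i /andP[_ ne_i].
  by rewrite eq_sym (negPf ne_i) andbF.
- rewrite andbF big1 // => i step_i; case: eqP => [gi | _]; last by rewrite andbF.
  by rewrite gi step_i in no_step.
Qed.

Local Open Scope ring_scope.

Lemma chebU_natSS (R : comNzRingType) n :
  chebU_nat R n.+2 = 2%:R *: 'X * chebU_nat R n.+1 - chebU_nat R n.
Proof. by rewrite /chebU_nat /=; case: chebU_pair. Qed.

Lemma chebU_rec (R : comNzRingType) (n : int) :
  chebU R (n + 1) = 2%:R *: 'X * chebU R n - chebU R (n - 1).
Proof.
case: n => [[|m]|[|[|m]]].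
- by rewrite /= mulr1 subr0.
- have -> : Posz m.+1 + 1 = Posz m.+2 by lia.
  have -> : Posz m.+1 - 1 = Posz m by lia.
  exact: chebU_natSS.
- by rewrite /= mulr0 sub0r opprK.
- by rewrite /= mulrN1 opprK addNr.
- have -> : Negz m.+2 + 1 = Negz m.+1 by rewrite !NegzE; lia.
  have -> : Negz m.+2 - 1 = Negz m.+3 by rewrite !NegzE; lia.
  rewrite /= chebU_natSS; ring.
Qed.

Lemma chebU_refl (R : comNzRingType) (m : int) : chebU R (- m) = - chebU R (m - 2).
Proof.
case: m => [[|[|m]]|m].
- by rewrite /= opprK.
- by rewrite /= oppr0.
- have -> : - Posz m.+2 = Negz m.+1 by rewrite NegzE.
  by have -> : Posz m.+2 - 2 = Posz m by lia.
- have -> : - Negz m = Posz m.+1 by rewrite NegzE opprK.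
  have -> : Negz m - 2 = Negz m.+2 by rewrite !NegzE; lia.
  by rewrite /= opprK.
Qed.

Lemma chebU_half_rec (n : int) :
  chebU_half (n + 1) = 'X * chebU_half n - chebU_half (n - 1).
Proof.
rewrite /chebU_half chebU_rec comp_polyB comp_polyM comp_polyZ comp_polyX.
by rewrite scalerA mulfV ?scale1r.
Qed.

Lemma chebU_half_refl (m : int) : chebU_half (- m) = - chebU_half (m - 2).
Proof.
by rewrite /chebU_half chebU_refl -(sub0r (chebU _ _)) comp_polyB comp_poly0 sub0r.
Qed.

(* D_K(n) = U_n(x/2) + (-1)^K U_{n-1}(x/2); thus Gden K = D_K(K) and
   Gnum K = D_K(K-2).  D_K inherits the Chebyshev recurrence and reflection. *)
Definition D (K : nat) (n : int) : {poly rat} :=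
  chebU_half n + (-1) ^+ K *: chebU_half (n - 1).

Lemma D_rec K (n : int) : D K (n + 1) = 'X * D K n - D K (n - 1).
Proof.
rewrite /D (_ : n + 1 - 1 = n - 1 + 1); last by lia.
rewrite !chebU_half_rec scalerBr scalerAr; ring.
Qed.

Lemma D_refl K (m : int) : D K (- m) = - ((-1) ^+ K *: D K (m - 1)).
Proof.
have sign_sq : ((-1) ^+ K : rat) * (-1) ^+ K = 1.
  by rewrite -exprD -signr_odd addnn odd_double.
rewrite /D !chebU_half_refl.
have -> : - m - 1 = - (m + 1) by lia.
rewrite chebU_half_refl.
have -> : m + 1 - 2 = m - 1 by lia.
have -> : m - 2 = m - 1 - 1 by lia.
by rewrite scalerDr scalerA sign_sq scale1r scalerN opprD addrC.
Qed.

(* The transfer-matrix method: if M is the 0/1 matrix of a relation adj and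
   walks n = M^n init, then the generating vector V = sum_n walks n x^n solves
   V = init + x M V.  Hence any polynomial vector P with P = init Y + x M P
   satisfies V Y = P, read here coefficientwise. *)
Section TransferMatrix.
Variables (R : comNzRingType) (K : nat) (adj : rel 'I_K) (init : 'I_K -> R).

Fixpoint walks (n : nat) (j : 'I_K) : R :=
  if n is n'.+1 then \sum_(i | adj j i) walks n' i else init j.

Variables (Y : {poly R}) (P : 'I_K -> {poly R}).
Hypothesis P_system : forall j, P j = init j *: Y + 'X * \sum_(i | adj j i) P i.

Lemma walks_genfun m j : \sum_(i < m.+1) walks i j * Y`_(m - i) = (P j)`_m.
Proof.
elim: m j => [|m IHm] j; rewrite P_system coefD coefZ coefXM.
  by rewrite big_ord1 addr0.
rewrite big_ord_recl subn0 coef_sum; congr (_ + _).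
under eq_bigr => i _ do rewrite subSS big_distrl.
by rewrite exchange_big; apply: eq_bigr => i _; rewrite -IHm.
Qed.
End TransferMatrix.

(* Up-down sequences with values 0..k as walks: reflecting the values at
   every other step turns both step relations into i + j >= k. *)
Definition updown_walks (k : nat) : nat -> 'I_k.+1 -> rat :=
  walks (fun j i : 'I_k.+1 => (k <= j + i)%N) (fun j => (j == ord_max)%:R).
Arguments updown_walks : clear implicits.

Lemma updown_walksS k n (j : 'I_k.+1) :
  updown_walks k n.+1 j = \sum_(i : 'I_k.+1 | (k <= j + i)%N) updown_walks k n i.
Proof. by []. Qed.

Lemma count_last_walks k n (j : 'I_k.+1) :
  (count_last n j)%:R = updown_walks k n.+1 (if ~~ odd n then rev_ord j else j).
Proof.
elim: n j => [|n IHn] j.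
- rewrite count_last0 updown_walksS (bigD1 ord_max) /=; last by have := ltn_ord j; lia.
  rewrite eqxx big1 ?addr0 // => i /andP[_ ne_i].
  by rewrite /= (negPf ne_i).
- rewrite count_last_rec natr_sum updown_walksS /=.
  under eq_bigr => i _ do rewrite IHn.
  have lt_i (i : 'I_k.+1) : (i < k.+1)%N := ltn_ord i.
  case: (boolP (odd n)) => odd_n /=.
  + by apply: eq_bigl => i; rewrite /updown_step odd_n /=; move: (lt_i i) (lt_i j); lia.
  + rewrite [RHS](reindex_inj rev_ord_inj) /=; apply: eq_bigl => i.
    by rewrite /updown_step odd_n /=; move: (lt_i i) (lt_i j); lia.
Qed.

Lemma cardA_walks k n : (cardA n k.+1)%:R = \sum_(j : 'I_k.+1) updown_walks k n j.
Proof.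
case: n => [|n].
- rewrite cardA0 (bigD1 ord_max) //= eqxx big1 ?addr0 // => i ne_i.
  by rewrite (negPf ne_i).
- rewrite cardA_last natr_sum; under eq_bigr => j _ do rewrite count_last_walks.
  by case: (odd n); last rewrite [RHS](reindex_inj rev_ord_inj).
Qed.

Lemma Gcoef_walks k i : Gcoef k.+1 i = updown_walks k i ord_max.
Proof.
case: i => [|n]; first by rewrite /= eqxx.
rewrite updown_walksS /= cardA_walks.
by apply: eq_bigl => i; rewrite leq_addr.
Qed.

(* The polynomial solution of the transfer system for K = k+1 values:
   P_j = (-1)^(j+1) x D(k-2j-1) for j < k, and P_k = -D(k-1),
   where D = D_{k+1}. *)
Definition numer (k j : nat) : {poly rat} :=
  if (j < k)%N then (-1) ^+ j.+1 *: ('X * D k.+1 (k%:Z - 2 * j%:Z - 1))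
  else - D k.+1 (k%:Z - 1).

Lemma numer_first k : numer k 0 = (k == 0)%N%:R *: D k.+1 k.+1 + 'X * numer k k.
Proof.
rewrite /numer ltnn; case: k => [|k] /=.
- have Dm1 : D 1 (-1) = D 1 0 by rewrite D_refl expr1 scaleN1r !opprK.
  have D1 : D 1 1 = 'X * D 1 0 - D 1 0.
    by rewrite -[X in D 1 X](add0r 1) D_rec (_ : 0 - 1 = -1) // Dm1.
  by rewrite scale1r (_ : 0%Z - 1 = -1) // Dm1 D1; ring.
- have -> : Posz k.+1 - 2 * 0 - 1 = Posz k.+1 - 1 by lia.
  by rewrite scale0r add0r expr1 scaleN1r mulrN.
Qed.

(* Rows j < k-1 (write k = j+2+t): the system reduces to the recurrence of D. *)
Lemma numer_step_inner j t :
  numer (j.+2 + t) j.+1 = numer (j.+2 + t) j + 'X * numer (j.+2 + t) t.+1.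
Proof.
set k := (j.+2 + t)%N.
have lt_j1 : (j.+1 < k)%N by rewrite /k; lia.
have lt_t1 : (t.+1 < k)%N by rewrite /k; lia.
rewrite /numer lt_j1 (ltnW lt_j1) lt_t1.
pose n := Posz t - Posz j.
have -> : Posz k - 2 * Posz j.+1 - 1 = n - 1 by rewrite /n /k; lia.
have -> : Posz k - 2 * Posz j - 1 = n + 1 by rewrite /n /k; lia.
have -> : Posz k - 2 * Posz t.+1 - 1 = - (n + 1) by rewrite /n /k; lia.
rewrite D_refl (_ : n + 1 - 1 = n); last by lia.
rewrite D_rec /k !exprS !exprD -[(-1) ^+ j]signr_odd -[(-1) ^+ t]signr_odd.
case: (odd j); case: (odd t);
  rewrite ?expr1 ?expr0 -!mul_polyC !(polyCM, polyCN, polyC1); ring.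
Qed.

Lemma numer_step_last j :
  numer j.+1 j.+1 = numer j.+1 j + 'X * numer j.+1 0 + D j.+2 j.+2.
Proof.
rewrite /numer ltnn ltnSn /= expr1 scaleN1r.
have -> : Posz j.+1 - 2 * Posz j - 1 = - Posz j by lia.
have -> : Posz j.+1 - 2 * 0 - 1 = Posz j by lia.
have -> : Posz j.+1 - 1 = Posz j by lia.
have D_top : D j.+2 j.+2 = 'X * ('X * D j.+2 j - D j.+2 (j%:Z - 1)) - D j.+2 j.
  have -> : Posz j.+2 = Posz j.+1 + 1 by lia.
  rewrite D_rec (_ : Posz j.+1 - 1 = j); last by lia.
  rewrite (_ : Posz j.+1 = j%:Z + 1) ?D_rec //; lia.
rewrite D_refl D_top !exprS -[(-1) ^+ j]signr_odd.
by case: (odd j); rewrite ?expr1 ?expr0 -!mul_polyC !(polyCM, polyCN, polyC1); ring.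
Qed.

Lemma numer_step k j : (j < k)%N ->
  numer k j.+1 = numer k j + 'X * numer k (k - 1 - j) + (j.+1 == k)%:R *: D k.+1 k.+1.
Proof.
move=> lt_jk; case: (ltnP j.+1 k) => [lt_j1k | le_kj1].
- have [t def_k] : exists t, k = (j.+2 + t)%N by exists (k - j.+2)%N; lia.
  have -> : (k - 1 - j = t.+1)%N by lia.
  by rewrite def_k numer_step_inner (_ : (j.+1 == _) = false) ?scale0r ?addr0 //; lia.
- have def_k : k = j.+1 by lia.
  by rewrite def_k subSS subn0 subnn eqxx scale1r numer_step_last.
Qed.

Lemma numer_sum k j : (j <= k)%N ->
  numer k j = (j == k)%:R *: D k.+1 k.+1 + 'X * \sum_(k - j <= i < k.+1) numer k i.
Proof.
elim: j => [_|j IHj lt_jk]; first by rewrite subn0 big_nat1 numer_first eq_sym.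
rewrite numer_step // IHj ?(ltnW lt_jk) // (_ : (j == k) = false); last by lia.
rewrite (@big_ltn _ _ _ (k - j.+1)); last by lia.
rewrite (_ : (k - j.+1).+1 = k - j)%N; last by lia.
rewrite (_ : (k - 1 - j = k - j.+1)%N); last by lia.
rewrite scale0r add0r mulrDr; ring.
Qed.

Lemma numer_system k (j : 'I_k.+1) :
  numer k j = (j == ord_max)%:R *: D k.+1 k.+1
              + 'X * \sum_(i : 'I_k.+1 | (k <= j + i)%N) numer k i.
Proof.
rewrite numer_sum ?big_geq_mkord; last by rewrite -ltnS.
have -> : (j == ord_max) = (j == k :> nat) by [].
by congr (_ + 'X * _); apply: eq_bigl => i /=; lia.
Qed.

Theorem corollary11 (k : nat) : (1 <= k)%N ->
  forall m : nat,
    \sum_(i < m.+1) Gcoef k i * (Gden k)`_(m - i) = - (Gnum k)`_m.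
Proof.
case: k => // k _ m.
have Gden_D : Gden k.+1 = D k.+1 k.+1 by [].
have Gnum_numer : - Gnum k.+1 = numer k k.
  rewrite /numer ltnn /Gnum /D; congr (- (chebU_half _ + _ *: chebU_half _)); lia.
under eq_bigr => i _ do rewrite Gcoef_walks.
rewrite Gden_D -coefN Gnum_numer.
exact: (walks_genfun (@numer_system k) m ord_max).
Qed.
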